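(* Let $M_\varphi$ be a hyperbolic once-punctured torus bundle with $H_1(M_\varphi;\mathbb{Z}_2)\cong\mathbb{Z}_2^3$. Then $X_\varphi(S)$ contains either exactly one or all three of the coordinate axes $L_1,L_2,L_3$ of $X(S)=\mathbb{C}^3$. Moreover, $X_{\varphi^2}(S)$ contains all three lines $L_1,L_2,L_3$.
   Context: $S$ is the once-punctured torus fibre with $\pi_1(S)$ free on $a,b$; $X(S)\cong\mathbb{C}^3$ is its $\mathrm{SL}(2,\mathbb{C})$-character variety with coordinates $(x,y,z)=(\operatorname{tr}\rho(a),\operatorname{tr}\rho(b),\operatorname{tr}\rho(ab))$; $L_1,L_2,L_3$ are the $x$-, $y$- and $z$-axes. For a monodromy $\psi$, $X_\psi(S)$ is the fixed set of the polynomial automorphism of $X(S)$ induced by $\psi$ ($\chi\mapsto\chi\circ\psi$). *)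

From HB Require Import structures.
From mathcomp Require Import all_boot all_order all_algebra.
From mathcomp Require Import complex.
From mathcomp Require Import Rstruct.
From Stdlib Require Import Rdefinitions.
Set Implicit Arguments.
Unset Strict Implicit.
Unset Printing Implicit Defensive.
Import Order.TTheory GRing.Theory Num.Theory.
Local Open Scope ring_scope.

Definition CC : Type := (Rdefinitions.R)[i].

(* A letter is (g, e): g = false for a, g = true for b; e = true means the
   inverse letter. A word is a sequence of letters. *)
Definition letter := (bool * bool)%type.
Definition word := seq letter.
Definition ga : word := [:: (false, false)].
Definition gb : word := [:: (true, false)].
Definition linv (l : letter) : letter := (l.1, ~~ l.2).
Definition winv (w : word) : word := rev (map linv w).
Definition wreduce (w : word) : word :=
  foldr (fun l acc => match acc with
                      | l' :: t => if l' == linv l then t else l :: acc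
                      | [::] => [:: l] end) [::] w.

Record endo := Endo { img_a : word; img_b : word }.
Definition wsubst (f : endo) (w : word) : word :=
  flatten (map (fun l => let u := if l.1 then img_b f else img_a f in
                         if l.2 then winv u else u) w).
Definition ecomp (f g : endo) : endo :=
  Endo (wsubst f (img_a g)) (wsubst f (img_b g)).
Definition eeq (f g : endo) : Prop :=
  wreduce (img_a f) = wreduce (img_a g) /\ wreduce (img_b f) = wreduce (img_b g).
Definition eid : endo := Endo ga gb.
Definition is_aut (f : endo) : Prop :=
  exists g : endo, eeq (ecomp f g) eid /\ eeq (ecomp g f) eid.

Definition expsum (g : bool) (w : word) : int :=
  \sum_(l <- w | l.1 == g) (if l.2 then (-1) else 1).
(* matrix of psi_* on H_1(S;Z) = Z^2 (columns = images of a, b) *)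
Definition abel (f : endo) : 'M[int]_2 :=
  \matrix_(i < 2, j < 2)
     expsum (i == 1 :> nat) (if j == 0 :> nat then img_a f else img_b f).

(* Hyperbolicity of M_psi (orientable bundle, psi orientation preserving):
   by Thurston, M_psi is hyperbolic iff psi is pseudo-Anosov iff
   |tr psi_*| > 2 (with det psi_* = 1). *)
Definition hyperbolic_bundle (f : endo) : Prop :=
  \det (abel f) = 1 /\ 2 < `|\tr (abel f)|.

(* dim_{F_2} H_1(M_psi; Z_2): by the Wang sequence,
   H_1(M_psi; Z_2) = Z_2 (+) coker(psi_* - 1 : Z_2^2 -> Z_2^2). *)
Definition H1_Z2_dim (f : endo) : nat :=
  1 + (2 - \rank (map_mx (fun z : int => (z%:~R : 'F_2)) (abel f - 1%:M))).

Definition pt := (CC * CC * CC)%type.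
Definition lmat (A B : 'M[CC]_2) (l : letter) : 'M[CC]_2 :=
  let M := if l.1 then B else A in if l.2 then invmx M else M.
Definition weval (A B : 'M[CC]_2) (w : word) : 'M[CC]_2 :=
  foldr (fun l M => lmat A B l *m M) 1%:M w.
Definition charpt (A B : 'M[CC]_2) : pt := (\tr A, \tr B, \tr (A *m B)).

(* X_psi(S): fixed set of chi |-> chi o psi.  The coordinates of chi o psi
   are (tr rho(psi a), tr rho(psi b), tr rho(psi(ab))), for any
   rho : F(a,b) -> SL(2,C) with character chi. *)
Definition Xfix (f : endo) : pt -> Prop := fun p =>
  forall A B : 'M[CC]_2, \det A = 1 -> \det B = 1 -> charpt A B = p ->
    charpt (weval A B (img_a f)) (weval A B (img_b f)) = p.

Definition L1 : pt -> Prop := fun p => p.1.2 = 0 /\ p.2 = 0.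
Definition L2 : pt -> Prop := fun p => p.1.1 = 0 /\ p.2 = 0.
Definition L3 : pt -> Prop := fun p => p.1.1 = 0 /\ p.1.2 = 0.
Definition subset_pt (P Q : pt -> Prop) : Prop := forall p, P p -> Q p.

From mathcomp Require Import all_boot all_order all_algebra.
From mathcomp Require Import complex Rstruct ring zify.
Import Order.TTheory GRing.Theory Num.Theory.
Local Open Scope ring_scope.

(* On each axis two of tr rho(a), tr rho(b), tr rho(ab) vanish,
   so a suitable pair (P, Q) of matrices among rho(a), rho(b), rho(ab)
   satisfies Q^2 = -1 and Q P Q^-1 = P^-1.  Every word then evaluates to some
   P^m Q^e, whose trace is 0 for e odd and (-1)^(e/2) tr P^m for e even, with
   e read off from the exponent sums modulo 4.  Since psi_* = 1 mod 2, the
   relevant image under psi has e even, and m = +-1 because psi is invertible.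
   Hence psi acts on L_i by a sign s_i depending only on psi_* mod 4, and
   det psi_* = 1 forces an odd number of the s_i to be 1; psi^2 acts on every
   axis by s_i^2 = 1. *)

Definition mx2 {R : Type} (a b c d : R) : 'M[R]_2 :=
  \matrix_(i < 2, j < 2) if i == 0 then (if j == 0 then a else b) else (if j == 0 then c else d).

Lemma ord2P (i : 'I_2) : i = 0 \/ i = 1.
Proof. by case: i => [[|[|//]] ?]; [left | right]; apply: val_inj. Qed.

Section TwoByTwo.
Context {R : comNzRingType}.
Implicit Types M N : 'M[R]_2.

Lemma mx2_eta M : M = mx2 (M 0 0) (M 0 1) (M 1 0) (M 1 1).
Proof. by apply/matrixP => i j; rewrite mxE; case: (ord2P i) => ->; case: (ord2P j) => ->. Qed.

Lemma det_mx2 (a b c d : R) : \det (mx2 a b c d) = a * d - b * c.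
Proof.
rewrite (expand_det_row _ 0) !big_ord_recl big_ord0 /cofactor !det_mx11 !mxE /=.
by rewrite !expr0 !expr1 !mul1r mulN1r addr0 mulrN.
Qed.

Lemma mxtrace_mx2 (a b c d : R) : \tr (mx2 a b c d) = a + d.
Proof. by rewrite /mxtrace !big_ord_recl big_ord0 addr0 !mxE. Qed.

Lemma mul_mx2 (a b c d a' b' c' d' : R) : mx2 a b c d * mx2 a' b' c' d' =
  mx2 (a * a' + b * c') (a * b' + b * d') (c * a' + d * c') (c * b' + d * d').
Proof.
apply/matrixP => i j; rewrite -mulmxE mxE !big_ord_recl big_ord0 addr0 !mxE /=.
by case: (ord2P i) => ->; case: (ord2P j) => ->.
Qed.

Lemma scalar_mx2 (a : R) : a%:M = mx2 a 0 0 a.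
Proof. by apply/matrixP => i j; rewrite !mxE; case: (ord2P i) => ->; case: (ord2P j) => ->. Qed.

Lemma Cayley_Hamilton_mx2 M : M * M = \tr M *: M - (\det M)%:M.
Proof.
rewrite (mx2_eta M); move: (M 0 0) (M 0 1) (M 1 0) (M 1 1) => a b c d.
rewrite mul_mx2 det_mx2 mxtrace_mx2 scalar_mx2; apply/matrixP => i j; rewrite !mxE /=.
by case: (ord2P i) => ->; case: (ord2P j) => -> /=; ring.
Qed.

End TwoByTwo.

Section SL2.
Context {R : fieldType}.
Implicit Types M P Q : 'M[R]_2.

Lemma det1_unitmx {M} : \det M = 1 -> M \is a GRing.unit.
Proof. by move=> dM; rewrite unitmxE dM unitr1. Qed.

Lemma det_mulSL2 {M N} : \det M = 1 -> \det N = 1 -> \det (M * N) = 1.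
Proof. by move=> dM dN; rewrite -mulmxE det_mulmx dM dN mulr1. Qed.

Lemma det_exprzSL2 {M} (n : int) : \det M = 1 -> \det (M ^ n) = 1.
Proof.
move=> dM; have detX k : \det (M ^+ k) = 1.
  by elim: k => [|k IH]; rewrite ?expr0 ?det1 // exprS det_mulSL2.
by case: n => k; rewrite ?NegzE /= ?det_inv ?detX ?invr1.
Qed.

Lemma sqr_traceless_SL2 {M} : \det M = 1 -> \tr M = 0 -> M * M = -1.
Proof. by move=> dM tM; rewrite Cayley_Hamilton_mx2 dM tM scale0r sub0r. Qed.

Lemma traceless_sqrN1_SL2 {M} : \det M = 1 -> M * M = -1 -> \tr M = 0.
Proof.
move=> dM MM; have := Cayley_Hamilton_mx2 M; rewrite MM dM => /eqP.
rewrite eq_sym subr_eq addrC subrr eq_sym => /eqP /(congr1 determinant).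
by rewrite detZ dM det0 mulr1 => /eqP; rewrite eq_sym expf_eq0 => /andP[_ /eqP].
Qed.

Lemma mxtraceV_SL2 {M} : \det M = 1 -> \tr M^-1 = \tr M.
Proof.
move=> dM; have uM := det1_unitmx dM.
have MV : M^-1 = \tr M *: 1 - M.
  apply: (mulrI uM); rewrite mulrV // mulrBr -scalerAr mulr1 Cayley_Hamilton_mx2 dM.
  by rewrite opprB addrC subrK.
by rewrite MV linearB /= linearZ /= mxtrace1 mulr_natr mulr2n addrK.
Qed.

Lemma mxtrace_pm1_SL2 {M n} : \det M = 1 -> (n = 1 \/ n = -1) -> \tr (M ^ n) = \tr M.
Proof. by move=> dM [->|->]; rewrite ?expr1z // exprN1 mxtraceV_SL2. Qed.

Lemma SL2_traceless_rel {P Q} : \det P = 1 -> \det Q = 1 -> \tr Q = 0 -> \tr (P * Q) = 0 ->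
  Q * Q = -1 /\ Q * P = P^-1 * Q.
Proof.
move=> dP dQ tQ tPQ; have QQ := sqr_traceless_SL2 dQ tQ.
have PQPQ := sqr_traceless_SL2 (det_mulSL2 dP dQ) tPQ.
split=> //; have uP := det1_unitmx dP.
have QPQ : Q * P * Q = - P^-1.
  by apply: (mulrI uP); rewrite mulrN mulrV // !mulrA; rewrite !mulrA in PQPQ.
have -> : Q * P = Q * P * Q * - Q by rewrite -mulrA mulrN QQ opprK mulr1.
by rewrite QPQ mulrN mulNr opprK.
Qed.
End SL2.

Lemma intertwineX (R : pzRingType) (Q X Y : R) k : Q * X = Y * Q -> Q * X ^+ k = Y ^+ k * Q.
Proof.
move=> QX; elim: k => [|k IH]; first by rewrite !expr0 mulr1 mul1r.
by rewrite !exprS mulrA QX -mulrA IH mulrA.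
Qed.

(* [(m, e)] stands for [P ^ m * Q ^+ e], where [Q * P * Q^-1 = P^-1] and
   [Q ^+ 2 = -1]; only [e] modulo 4 matters. *)
Definition dic := (int * nat)%type.
Definition dic_mul (x y : dic) : dic :=
  (x.1 + (if odd x.2 then - y.1 else y.1), (x.2 + y.2)%N).
Definition dic_inv (x : dic) : dic := (if odd x.2 then x.1 else - x.1, (3 * x.2)%N).
Definition dic_letter (xa xb : dic) (l : letter) : dic :=
  let x := if l.1 then xb else xa in if l.2 then dic_inv x else x.
Definition dic_eval (xa xb : dic) (w : word) : dic :=
  foldr (fun l x => dic_mul (dic_letter xa xb l) x) (0, 0%N) w.

Definition dic_elt {R : unitRingType} (P Q : R) (x : dic) : R := P ^ x.1 * Q ^+ x.2.

Section Dicyclic.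
Context {R : unitRingType} {P Q : R}.
Hypotheses (uP : P \is a GRing.unit) (QQ : Q * Q = -1) (QP : Q * P = P^-1 * Q).

Lemma mulQ_exprz (n : int) : Q * P ^ n = P ^ (- n) * Q.
Proof.
have QPV : Q * P^-1 = P * Q.
  by rewrite -{1}(mulVKr uP Q) -QP -!mulrA mulrV // mulr1.
by case: n => k; rewrite ?NegzE ?opprK -exprz_inv; apply: intertwineX.
Qed.

Lemma mulQX_exprz (e : nat) (n : int) :
  Q ^+ e * P ^ n = P ^ (if odd e then - n else n) * Q ^+ e.
Proof.
elim: e n => [|e IH] n; first by rewrite !expr0 mulr1 mul1r.
rewrite exprS -mulrA IH mulrA mulQ_exprz -mulrA /=.
by case: (odd e); rewrite ?opprK.
Qed.

Lemma dic_eltM x y : dic_elt P Q x * dic_elt P Q y = dic_elt P Q (dic_mul x y).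
Proof.
rewrite /dic_elt /dic_mul /= mulrA -[_ * _ * P ^ y.1]mulrA mulQX_exprz.
by rewrite mulrA -exprzDr // -mulrA -exprD.
Qed.

Lemma exprQ_mul2 (m : nat) : Q ^+ (2 * m) = (-1) ^+ m.
Proof. by rewrite exprM expr2 QQ. Qed.

Lemma dic_eltV x : (dic_elt P Q x)^-1 = dic_elt P Q (dic_inv x).
Proof.
have Q4 k : dic_elt P Q (0, (k + 3 * k)%N) = 1.
  have -> : (k + 3 * k = 2 * (2 * k))%N by lia.
  by rewrite /dic_elt expr0z mul1r exprQ_mul2 exprM sqrrN !expr1n.
have xV : dic_elt P Q x * dic_elt P Q (dic_inv x) = 1.
  by rewrite dic_eltM /dic_mul /dic_inv /=; case: (odd x.2); rewrite subrr Q4.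
have Vx : dic_elt P Q (dic_inv x) * dic_elt P Q x = 1.
  rewrite dic_eltM /dic_mul /dic_inv /= oddM /=.
  by case: (odd x.2); rewrite /= ?subrr ?addNr addnC Q4.
have ux : dic_elt P Q x \is a GRing.unit by apply/unitrP; exists (dic_elt P Q (dic_inv x)).
by rewrite -[_^-1]mulr1 -xV mulKr.
Qed.

End Dicyclic.

Lemma weval_dic (P Q : 'M[CC]_2) xa xb w :
  P \is a GRing.unit -> Q * Q = -1 -> Q * P = P^-1 * Q ->
  weval (dic_elt P Q xa) (dic_elt P Q xb) w = dic_elt P Q (dic_eval xa xb w).
Proof.
move=> uP QQ QP; elim: w => [|[g e] w IH] /=; first by rewrite /dic_elt expr0z expr0 mulr1.
rewrite IH /lmat /dic_letter mulmxE; case: g; case: e => /=;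
  by rewrite -?[invmx _]/(_^-1) ?(dic_eltV uP QQ QP) (dic_eltM uP QP).
Qed.

Section DicyclicSL2.
Context {R : fieldType} {P Q : 'M[R]_2}.
Hypotheses (dP : \det P = 1) (dQ : \det Q = 1) (QQ : Q * Q = -1) (QP : Q * P = P^-1 * Q).

Lemma det_dic_elt x : \det (dic_elt P Q x) = 1.
Proof. by rewrite det_mulSL2 // ?det_exprzSL2 // (det_exprzSL2 x.2 dQ). Qed.

Lemma mxtrace_dic_elt_odd x : odd x.2 -> \tr (dic_elt P Q x) = 0.
Proof.
move=> ox; apply: traceless_sqrN1_SL2; first exact: det_dic_elt.
rewrite (dic_eltM (det1_unitmx dP) QP) /dic_mul ox /= subrr /dic_elt expr0z mul1r.
by rewrite addnn -mul2n exprQ_mul2 // -signr_odd ox.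
Qed.

Lemma mxtrace_dic_elt_even x : ~~ odd x.2 -> (x.1 = 1 \/ x.1 = -1) ->
  \tr (dic_elt P Q x) = (-1) ^+ x.2./2 * \tr P.
Proof.
move=> ex x1; rewrite /dic_elt; have -> : Q ^+ x.2 = (-1) ^+ x.2./2.
  by rewrite -[x.2 in LHS]odd_double_half (negbTE ex) add0n -mul2n exprQ_mul2.
rewrite -(mxtrace_pm1_SL2 dP x1) -signr_odd -[in RHS]signr_odd.
by case: (odd _); rewrite ?expr1 ?expr0 ?mulr1 ?mul1r // mulrN1 mulN1r linearN.
Qed.

End DicyclicSL2.

Section WordEvaluation.
Context {A B : 'M[CC]_2}.
Hypotheses (uA : A \is a GRing.unit) (uB : B \is a GRing.unit).

Lemma weval_cat w1 w2 : weval A B (w1 ++ w2) = weval A B w1 * weval A B w2.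
Proof. by elim: w1 => [|l w1 IH] /=; rewrite ?mul1r // IH !mulmxE mulrA. Qed.

Lemma lmat_unit l : lmat A B l \is a GRing.unit.
Proof. by case: l => [[] []]; rewrite /lmat /= -?[invmx _]/(_^-1) ?unitrV. Qed.

Lemma lmat_linv l : lmat A B (linv l) = (lmat A B l)^-1.
Proof. by case: l => [g []]; rewrite /lmat /linv //= invrK. Qed.

Lemma weval_unit w : weval A B w \is a GRing.unit.
Proof. by elim: w => [|l w IH] /=; rewrite ?unitr1 // mulmxE unitrMl // lmat_unit. Qed.

Lemma weval_winv w : weval A B (winv w) = (weval A B w)^-1.
Proof.
elim: w => [|l w IH]; first by rewrite /= invr1.
rewrite /winv /= rev_cons -cats1 weval_cat -/(winv w) IH /= lmat_linv mulmx1 mulmxE.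
by rewrite invrM ?lmat_unit ?weval_unit.
Qed.

Lemma weval_wsubst f w :
  weval A B (wsubst f w) = weval (weval A B (img_a f)) (weval A B (img_b f)) w.
Proof.
elim: w => [|[g e] w IH] //=.
rewrite weval_cat -/(wsubst f w) IH /lmat mulmxE.
by case: g; case: e; rewrite //= weval_winv.
Qed.

Lemma weval_wreduce w : weval A B (wreduce w) = weval A B w.
Proof.
elim: w => [|l w IH] //=; rewrite -IH.
case: (wreduce w) => [|l' t] //=; case: eqP => [->|_] //=.
by rewrite lmat_linv mulmxE mulrA mulrV ?lmat_unit ?mul1r.
Qed.

End WordEvaluation.

Lemma det_weval (A B : 'M[CC]_2) w :
  \det A = 1 -> \det B = 1 -> \det (weval A B w) = 1.
Proof.
move=> dA dB; elim: w => [|[[] []] w IH] /=; rewrite ?det1 // det_mulmx IH mulr1 /lmat /=;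
  by rewrite ?det_inv ?dA ?dB ?invr1.
Qed.

Lemma weval_comp_inverse {psi g : endo} {A B : 'M[CC]_2} :
  eeq (ecomp psi g) eid -> A \is a GRing.unit -> B \is a GRing.unit ->
  weval (weval A B (img_a psi)) (weval A B (img_b psi)) (img_a g) = A /\
  weval (weval A B (img_a psi)) (weval A B (img_b psi)) (img_b g) = B.
Proof.
move=> [ea eb] uA uB; rewrite -!weval_wsubst //.
rewrite -(weval_wreduce uA uB (wsubst _ (img_a g))) -(weval_wreduce uA uB (wsubst _ (img_b g))).
by rewrite [wreduce _]ea [wreduce (wsubst _ _)]eb /= !mulmx1.
Qed.

Lemma expsum_cons g l w : expsum g (l :: w) =
  (if l.1 == g then (if l.2 then -1 else 1) else 0) + expsum g w.
Proof. by rewrite /expsum big_cons; case: ifP; rewrite ?add0r. Qed.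

Lemma dic_eval_exponent xa xb w : (4 %| (dic_eval xa xb w).2%:Z
  - (xa.2%:Z * expsum false w + xb.2%:Z * expsum true w))%Z.
Proof.
elim: w => [|[g e] w IH]; first by rewrite /= /expsum !big_nil !mulr0 subr0.
move/dvdzP: IH => [q Hq]; apply/dvdzP.
rewrite /= !expsum_cons /dic_letter /=.
case: g; case: e => /=; rewrite ?PoszD ?PoszM.
- by exists (q + xb.2%:Z); lia.
- by exists q; lia.
- by exists (q + xa.2%:Z); lia.
- by exists q; lia.
Qed.

Lemma oddn_mod4 {n : nat} {z : int} : (4 %| n%:Z - z)%Z -> odd n = ~~ (2 %| z)%Z.
Proof.
move=> h; have := odd_double_half n.
by case: (odd n); case E: (2 %| z)%Z => //=; rewrite ?add0n ?add1n; lia.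
Qed.

Lemma sign_half_mod4 {R : pzRingType} {n : nat} {z : int} :
  (4 %| n%:Z - z)%Z -> (2 %| z)%Z -> (-1) ^+ n./2 = (if (4 %| z)%Z then 1 else -1) :> R.
Proof.
move=> h z2; rewrite -signr_odd; have := odd_double_half n; have := odd_double_half n./2.
by case: (odd n); case: (odd n./2); case E: (4 %| z)%Z => //=; rewrite ?add0n ?add1n; lia.
Qed.

Lemma expsum_mod2 {psi} : H1_Z2_dim psi = 3%N ->
  [/\ ~~ (2 %| expsum false (img_a psi))%Z, (2 %| expsum true (img_a psi))%Z,
      (2 %| expsum false (img_b psi))%Z & ~~ (2 %| expsum true (img_b psi))%Z].
Proof.
rewrite /H1_Z2_dim => dim3.
have /matrixP psi1 : map_mx (fun z : int => (z%:~R : 'F_2)) (abel psi - 1%:M) = 0.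
  by apply/eqP; rewrite -mxrank_eq0; lia.
have F2 : 2 \in [pchar 'F_2] by apply: pchar_Fp.
have psi1_mod2 i j : (2 %| abel psi i j - (i == j)%:R)%Z.
  by rewrite (dvdz_pcharf F2); move: (psi1 i j); rewrite !mxE => ->.
have : [/\ (2 %| expsum false (img_a psi) - 1)%Z, (2 %| expsum true (img_a psi))%Z,
          (2 %| expsum false (img_b psi))%Z & (2 %| expsum true (img_b psi) - 1)%Z].
  by move: (psi1_mod2 0 0) (psi1_mod2 1 0) (psi1_mod2 0 1) (psi1_mod2 1 1); rewrite !mxE !subr0.
by case=> *; split; lia.
Qed.

Lemma expsum_det {psi} : hyperbolic_bundle psi ->
  expsum false (img_a psi) * expsum true (img_b psi)
  - expsum false (img_b psi) * expsum true (img_a psi) = 1.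
Proof. by case; rewrite [abel psi]mx2_eta det_mx2 !mxE. Qed.

Lemma det1_xor_dvd4 (a b c d : int) :
  ~~ (2 %| a)%Z -> (2 %| b)%Z -> (2 %| c)%Z -> ~~ (2 %| d)%Z -> a * d - c * b = 1 ->
  (4 %| b)%Z (+) (4 %| c)%Z (+) (4 %| a + c + 3 * b + 3 * d)%Z.
Proof.
move=> a2 b2 c2 d2.
have /dvdzP [x ea] : (2 %| a - 1)%Z by lia.
have /dvdzP [w ed] : (2 %| d - 1)%Z by lia.
have {ea} -> : a = x * 2 + 1 by rewrite -ea subrK.
have {ed} -> : d = w * 2 + 1 by rewrite -ed subrK.
move/dvdzP: b2 c2 => [y ->] /dvdzP [z ->] det1.
have : x + w + 2 * (x * w) - 2 * (z * y) = 0.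
  apply: (mulfI (_ : 2 != 0 :> int)) => //.
  transitivity ((x * 2 + 1) * (w * 2 + 1) - z * 2 * (y * 2) - 1); first by ring.
  by rewrite det1 subrr mulr0.
move: (x * w) (z * y) => p q {det1 a2 d2}.
by case: (4 %| _)%Z / idP; case: (4 %| _)%Z / idP; case: (4 %| _)%Z / idP => //=; lia.
Qed.

Lemma dvdz1_pm (n : int) : (n %| 1)%Z -> n = 1 \/ n = -1.
Proof. by rewrite dvdz1 => /eqP; lia. Qed.

Definition dic_sub (n k : int) (x : dic) : bool :=
  if odd x.2 then (n %| x.1 - k)%Z else (n %| x.1)%Z.

Lemma dic_subM n k x y : dic_sub n k x -> dic_sub n k y -> dic_sub n k (dic_mul x y).
Proof.
case: x => m e; case: y => m' e'; rewrite /dic_sub /dic_mul /= oddD.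
by case: (odd e); case: (odd e') => /= /dvdzP [q1 h1] /dvdzP [q2 h2]; apply/dvdzP;
  [exists (q1 - q2) | exists (q1 - q2) | exists (q1 + q2) | exists (q1 + q2)]; lia.
Qed.

Lemma dic_subV n k x : dic_sub n k x -> dic_sub n k (dic_inv x).
Proof.
case: x => m e; rewrite /dic_sub /dic_inv /= oddM /=.
by case: (odd e) => //= /dvdzP [q h]; apply/dvdzP; exists (- q); lia.
Qed.

Lemma dic_sub_eval {n k xa xb} :
  dic_sub n k xa -> dic_sub n k xb -> forall w, dic_sub n k (dic_eval xa xb w).
Proof.
move=> ha hb w; elim: w => [|[[] []] w IH] /=; first by rewrite /dic_sub dvdz0.
all: by apply: dic_subM; rewrite /dic_letter //= dic_subV.
Qed.

Section FaithfulRepresentation.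
Context {R : numFieldType}.

Definition diag2 : 'M[R]_2 := mx2 2 0 0 2^-1.
Definition rotJ : 'M[R]_2 := mx2 0 1 (-1) 0.

Lemma two_neq0 : (2 : R) != 0.
Proof. by rewrite pnatr_eq0. Qed.

Lemma det_diag2 : \det diag2 = 1.
Proof. by rewrite det_mx2 mulr0 subr0 mulfV // two_neq0. Qed.

Lemma det_rotJ : \det rotJ = 1.
Proof. by rewrite det_mx2 mulr0 sub0r mulrN1 opprK. Qed.

Lemma mxtrace_rotJ : \tr rotJ = 0.
Proof. by rewrite mxtrace_mx2 addr0. Qed.

Lemma mxtrace_diag2_rotJ : \tr (diag2 * rotJ) = 0.
Proof. by rewrite mul_mx2 mxtrace_mx2 !(mulr0, mul0r, addr0). Qed.

Lemma diag2_rotJ_rel : rotJ * rotJ = -1 /\ rotJ * diag2 = diag2^-1 * rotJ.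
Proof. exact: SL2_traceless_rel det_diag2 det_rotJ mxtrace_rotJ mxtrace_diag2_rotJ. Qed.

Lemma mx2_diag_exprn (a b : R) k : mx2 a 0 0 b ^+ k = mx2 (a ^+ k) 0 0 (b ^+ k).
Proof.
elim: k => [|k IH]; first by rewrite !expr0 -scalar_mx2.
by rewrite exprS IH mul_mx2 !(mulr0, mul0r, addr0, add0r) -!exprS.
Qed.

Lemma diag2_exprz (n : int) : diag2 ^ n = mx2 (2 ^ n) 0 0 (2 ^ (- n)).
Proof.
have diag2V : diag2^-1 = mx2 2^-1 0 0 2.
  have h : diag2 * mx2 2^-1 0 0 2 = 1.
    by rewrite mul_mx2 !(mulr0, mul0r, addr0, add0r) divff ?mulVf ?two_neq0 // -scalar_mx2.
  by have [uD _] := mulmx1_unit h; rewrite -[LHS]mulr1 -h mulKr.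
case: n => k; first by rewrite -exprz_inv; exact: mx2_diag_exprn.
by rewrite NegzE -exprz_inv diag2V opprK -exprz_inv; exact: mx2_diag_exprn.
Qed.

Lemma dic_elt_diag2_00 x :
  dic_elt diag2 rotJ x 0 0 = if odd x.2 then 0 else (-1) ^+ x.2./2 * 2 ^ x.1.
Proof.
have [rotJ2 _] := diag2_rotJ_rel; rewrite /dic_elt.
have -> : rotJ ^+ x.2 = rotJ ^+ odd x.2 * (-1) ^+ x.2./2.
  by rewrite -[x.2 in LHS]odd_double_half -mul2n exprD exprQ_mul2.
rewrite mulrA diag2_exprz /rotJ -signr_odd -[in RHS]signr_odd.
by case: (odd x.2); case: (odd x.2./2);
  rewrite ?expr1 ?expr0 ?mulr1 ?mul1r ?mulrN1 ?mulN1r ?mul_mx2 !mxE /=;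
  rewrite ?(mulr0, mul0r, addr0, oppr0).
Qed.

Lemma dic_elt_diag2_inj x y : dic_elt diag2 rotJ x = dic_elt diag2 rotJ y ->
  ~~ odd y.2 -> ~~ odd x.2 /\ x.1 = y.1.
Proof.
move=> /(congr1 (fun M : 'M[R]_2 => `|M 0 0|)) + ey; rewrite /= !dic_elt_diag2_00 (negbTE ey).
have pow2_gt0 n : (0 : R) < 2 ^ n by rewrite exprz_gt0 ?ltr0n.
rewrite normrMsign [`|2 ^ y.1|]gtr0_norm //.
case: (odd x.2) => /=; first by rewrite normr0 => h; have := pow2_gt0 y.1; rewrite -h ltxx.
rewrite normrMsign gtr0_norm // => e; split=> //.
have : (2 : R) ^ (x.1 - y.1) == 1.
  by rewrite expfzDr ?two_neq0 // e -expfzDr ?two_neq0 // subrr expr0z.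
by rewrite pexprz_eq1 ?ler0n // pnatr_eq1 orbF subr_eq0 => /eqP.
Qed.

End FaithfulRepresentation.

Lemma charpt_weval_dic (f : endo) {P Q A B : 'M[CC]_2} {xa xb} :
  P \is a GRing.unit -> Q * Q = -1 -> Q * P = P^-1 * Q ->
  dic_elt P Q xa = A -> dic_elt P Q xb = B ->
  let u := dic_eval xa xb (img_a f) in let v := dic_eval xa xb (img_b f) in
  charpt (weval A B (img_a f)) (weval A B (img_b f)) =
  (\tr (dic_elt P Q u), \tr (dic_elt P Q v), \tr (dic_elt P Q (dic_mul u v))).
Proof. by move=> uP QQ QP <- <- u v; rewrite /charpt !weval_dic // mulmxE dic_eltM. Qed.

(* As [psi] is invertible, [a] and [b] are words in [psi a] and [psi b]; the
   representation by [diag2] and [rotJ] sees [m] on elements with [e] even. *)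
Lemma dvdz_dic_sub {psi g : endo} xa xb {n k} w : eeq (ecomp psi g) eid ->
  dic_sub n k (dic_eval xa xb (img_a psi)) -> dic_sub n k (dic_eval xa xb (img_b psi)) ->
  ~~ odd (dic_eval xa xb w).2 -> (n %| (dic_eval xa xb w).1)%Z.
Proof.
set u := dic_eval _ _ (img_a psi); set v := dic_eval _ _ (img_b psi).
move=> psi_g su sv ew; have [JJ JD] := @diag2_rotJ_rel CC.
have uD : (diag2 : 'M[CC]_2) \is a GRing.unit by rewrite det1_unitmx ?det_diag2.
have elt_unit x : (dic_elt diag2 rotJ x : 'M[CC]_2) \is a GRing.unit.
  by rewrite det1_unitmx ?det_dic_elt ?det_diag2 ?det_rotJ.
have [ga gb] := weval_comp_inverse psi_g (elt_unit xa) (elt_unit xb).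
have : dic_elt diag2 rotJ (dic_eval u v (wsubst g w))
       = dic_elt diag2 rotJ (dic_eval xa xb w) :> 'M[CC]_2.
  by rewrite -!weval_dic // weval_wsubst ?weval_unit ?elt_unit // ga gb.
move=> /dic_elt_diag2_inj /(_ ew) [ew' <-].
by have := dic_sub_eval su sv (wsubst g w); rewrite /dic_sub (negbTE ew').
Qed.

Definition pt_scale (s : CC) (p : pt) : pt := (s * p.1.1, s * p.1.2, s * p.2).

Lemma pt_scaleN1_id p : pt_scale (-1) p = p -> p = (0, 0, 0).
Proof.
have oppid (x : CC) : -1 * x = x -> x = 0.
  move=> h; have : x *+ 2 == 0 by rewrite mulr2n -{1}h mulN1r addNr.
  by rewrite mulrn_eq0 => /eqP.
by case: p => [[x y] z] [/oppid -> /oppid -> /oppid ->].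
Qed.

Section AxisAction.
Context {psi : endo} {L : pt -> Prop} {fixed : bool}.
Hypothesis L_scale : forall s p, L p -> L (pt_scale s p).
Hypothesis psi_on_L : forall A B : 'M[CC]_2, \det A = 1 -> \det B = 1 -> L (charpt A B) ->
  charpt (weval A B (img_a psi)) (weval A B (img_b psi))
  = pt_scale (if fixed then 1 else -1) (charpt A B).

Lemma subset_Xfix_sign {A0 B0 : 'M[CC]_2} : \det A0 = 1 -> \det B0 = 1 ->
  L (charpt A0 B0) -> charpt A0 B0 <> (0, 0, 0) -> subset_pt L (Xfix psi) <-> fixed.
Proof.
move=> dA0 dB0 LA0 A0_neq0; split=> [Lfix | fixed_ p Lp A B dA dB pE]; last subst p.
  apply/negPn/negP => unfixed; apply/A0_neq0/pt_scaleN1_id.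
  have := psi_on_L _ _ dA0 dB0 LA0.
  by rewrite (Lfix _ LA0 _ _ dA0 dB0 erefl) (negbTE unfixed).
rewrite psi_on_L // fixed_; case: (charpt A B) => [[x y] z].
by rewrite /pt_scale /= !mul1r.
Qed.

Lemma subset_Xfix_sqr : subset_pt L (Xfix (ecomp psi psi)).
Proof.
move=> p Lp A B dA dB pE; subst p; rewrite /= !weval_wsubst ?det1_unitmx //.
have Lpsi : L (charpt (weval A B (img_a psi)) (weval A B (img_b psi))).
  by rewrite psi_on_L //; apply: L_scale.
rewrite psi_on_L ?det_weval // psi_on_L //; case: (charpt A B) => [[x y] z].
by rewrite /pt_scale /=; case: fixed; rewrite !mulrA ?mulr1 ?mulrN1 ?opprK !mul1r.
Qed.

End AxisAction.

Section Axes.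
Context {psi g : endo}.
Hypothesis psi_g : eeq (ecomp psi g) eid.
Hypotheses (odd_a_psia : ~~ (2 %| expsum false (img_a psi))%Z)
  (even_b_psia : (2 %| expsum true (img_a psi))%Z)
  (even_a_psib : (2 %| expsum false (img_b psi))%Z)
  (odd_b_psib : ~~ (2 %| expsum true (img_b psi))%Z).

Lemma charpt_psi_L1 A B : \det A = 1 -> \det B = 1 -> L1 (charpt A B) ->
  charpt (weval A B (img_a psi)) (weval A B (img_b psi))
  = pt_scale (if (4 %| expsum true (img_a psi))%Z then 1 else -1) (charpt A B).
Proof.
move=> dA dB [/= tB tAB]; have [BB BA] := SL2_traceless_rel dA dB tB tAB.
have eA : dic_elt A B (1, 0%N) = A by rewrite /dic_elt expr1z mulr1.
have eB : dic_elt A B (0, 1%N) = B by rewrite /dic_elt expr0z mul1r.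
rewrite (charpt_weval_dic psi (det1_unitmx dA) BB BA eA eB) /charpt /pt_scale /= tB tAB !mulr0.
set u := dic_eval _ _ (img_a psi); set v := dic_eval _ _ (img_b psi).
have u4 : (4 %| u.2%:Z - expsum true (img_a psi))%Z.
  by have := dic_eval_exponent (1, 0%N) (0, 1%N) (img_a psi); rewrite /= mul0r add0r mul1r.
have v4 : (4 %| v.2%:Z - expsum true (img_b psi))%Z.
  by have := dic_eval_exponent (1, 0%N) (0, 1%N) (img_b psi); rewrite /= mul0r add0r mul1r.
have eu : ~~ odd u.2 by rewrite (oddn_mod4 u4) even_b_psia.
have ov : odd v.2 by rewrite (oddn_mod4 v4).
have u1 : u.1 = 1 \/ u.1 = -1.
  apply: dvdz1_pm; apply: (dvdz_dic_sub (1, 0%N) (0, 1%N) (k := v.1) ga psi_g) => //.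
    by rewrite /dic_sub (negbTE eu) dvdzz.
  by rewrite /dic_sub ov subrr dvdz0.
have ouv : odd (dic_mul u v).2 by rewrite /= oddD (negbTE eu) ov.
rewrite [\tr (dic_elt _ _ v)]mxtrace_dic_elt_odd //.
rewrite [\tr (dic_elt _ _ (dic_mul _ _))]mxtrace_dic_elt_odd //.
by rewrite mxtrace_dic_elt_even // (sign_half_mod4 u4 even_b_psia).
Qed.

Lemma charpt_psi_L2 A B : \det A = 1 -> \det B = 1 -> L2 (charpt A B) ->
  charpt (weval A B (img_a psi)) (weval A B (img_b psi))
  = pt_scale (if (4 %| expsum false (img_b psi))%Z then 1 else -1) (charpt A B).
Proof.
move=> dA dB [/= tA tAB]; have tBA : \tr (B * A) = 0 by rewrite -mulmxE mxtrace_mulC.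
have [AA AB] := SL2_traceless_rel dB dA tA tBA.
have eA : dic_elt B A (0, 1%N) = A by rewrite /dic_elt expr0z mul1r.
have eB : dic_elt B A (1, 0%N) = B by rewrite /dic_elt expr1z mulr1.
rewrite (charpt_weval_dic psi (det1_unitmx dB) AA AB eA eB) /charpt /pt_scale /= tA tAB !mulr0.
set u := dic_eval _ _ (img_a psi); set v := dic_eval _ _ (img_b psi).
have u4 : (4 %| u.2%:Z - expsum false (img_a psi))%Z.
  by have := dic_eval_exponent (0, 1%N) (1, 0%N) (img_a psi); rewrite /= mul0r addr0 mul1r.
have v4 : (4 %| v.2%:Z - expsum false (img_b psi))%Z.
  by have := dic_eval_exponent (0, 1%N) (1, 0%N) (img_b psi); rewrite /= mul0r addr0 mul1r.
have ou : odd u.2 by rewrite (oddn_mod4 u4).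
have ev : ~~ odd v.2 by rewrite (oddn_mod4 v4) even_a_psib.
have v1 : v.1 = 1 \/ v.1 = -1.
  apply: dvdz1_pm; apply: (dvdz_dic_sub (0, 1%N) (1, 0%N) (k := u.1) gb psi_g) => //.
    by rewrite /dic_sub ou subrr dvdz0.
  by rewrite /dic_sub (negbTE ev) dvdzz.
have ouv : odd (dic_mul u v).2 by rewrite /= oddD ou (negbTE ev).
rewrite [\tr (dic_elt _ _ u)]mxtrace_dic_elt_odd //.
rewrite [\tr (dic_elt _ _ (dic_mul _ _))]mxtrace_dic_elt_odd //.
by rewrite mxtrace_dic_elt_even // (sign_half_mod4 v4 even_a_psib).
Qed.

Lemma charpt_psi_L3 A B : \det A = 1 -> \det B = 1 -> L3 (charpt A B) ->
  charpt (weval A B (img_a psi)) (weval A B (img_b psi))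
  = pt_scale (if (4 %| expsum false (img_a psi) + expsum false (img_b psi)
                       + 3 * expsum true (img_a psi) + 3 * expsum true (img_b psi))%Z
              then 1 else -1) (charpt A B).
Proof.
move=> dA dB [/= tA tB]; have AA := sqr_traceless_SL2 dA tA; have BB := sqr_traceless_SL2 dB tB.
have dAB := det_mulSL2 dA dB; have uAB := det1_unitmx dAB.
have tABA : \tr (A * B * A) = 0.
  by rewrite -mulmxE mxtrace_mulC !mulmxE mulrA AA mulN1r linearN /= tB oppr0.
have [_ ABA] := SL2_traceless_rel dAB dA tA tABA.
have eA : dic_elt (A * B) A (0, 1%N) = A by rewrite /dic_elt expr0z mul1r.
have eB : dic_elt (A * B) A (-1, 3%N) = B.
  have A3 : A ^+ 3 = A * B * B by rewrite -mulrA BB exprS expr2 AA.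
  by rewrite /dic_elt exprN1 A3 mulKr.
rewrite (charpt_weval_dic psi uAB AA ABA eA eB) /charpt /pt_scale /= tA tB !mulr0.
set u := dic_eval _ _ (img_a psi); set v := dic_eval _ _ (img_b psi).
have u4 : (4 %| u.2%:Z - (expsum false (img_a psi) + 3 * expsum true (img_a psi)))%Z.
  by have := dic_eval_exponent (0, 1%N) (-1, 3%N) (img_a psi); rewrite /= mul1r.
have v4 : (4 %| v.2%:Z - (expsum false (img_b psi) + 3 * expsum true (img_b psi)))%Z.
  by have := dic_eval_exponent (0, 1%N) (-1, 3%N) (img_b psi); rewrite /= mul1r.
have ou : odd u.2 by rewrite (oddn_mod4 u4); lia.
have ov : odd v.2 by rewrite (oddn_mod4 v4); lia.
have uv4 : (4 %| (dic_mul u v).2%:Z - (expsum false (img_a psi) + expsum false (img_b psi)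
             + 3 * expsum true (img_a psi) + 3 * expsum true (img_b psi)))%Z.
  by move: u4 v4; rewrite /= PoszD; lia.
have euv : ~~ odd (dic_mul u v).2 by rewrite /= oddD ou ov.
have uv1 : (dic_mul u v).1 = 1 \/ (dic_mul u v).1 = -1.
  apply: dvdz1_pm; rewrite /= ou.
  apply: (dvdz_dic_sub (0, 1%N) (-1, 3%N) (k := u.1) (ga ++ gb) psi_g) => //.
    by rewrite /dic_sub ou subrr dvdz0.
  by rewrite /dic_sub ov -opprB rpredN dvdzz.
rewrite [\tr (dic_elt _ _ u)]mxtrace_dic_elt_odd // [\tr (dic_elt _ _ v)]mxtrace_dic_elt_odd //.
by rewrite mxtrace_dic_elt_even // (sign_half_mod4 uv4) //; lia.
Qed.

Lemma Xfix_L1 : (subset_pt L1 (Xfix psi) <-> (4 %| expsum true (img_a psi))%Z)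
  /\ subset_pt L1 (Xfix (ecomp psi psi)).
Proof.
have L1_scale s p : L1 p -> L1 (pt_scale s p).
  by case: p => [[x y] z] [/= -> ->]; rewrite /L1 /= !mulr0.
split; last exact: subset_Xfix_sqr L1_scale charpt_psi_L1.
apply: (subset_Xfix_sign charpt_psi_L1 (det1 _ _) det_rotJ).
  by rewrite /L1 /charpt /= mul1mx mxtrace_rotJ.
by case; rewrite mxtrace1 => /eqP; rewrite pnatr_eq0.
Qed.

Lemma Xfix_L2 : (subset_pt L2 (Xfix psi) <-> (4 %| expsum false (img_b psi))%Z)
  /\ subset_pt L2 (Xfix (ecomp psi psi)).
Proof.
have L2_scale s p : L2 p -> L2 (pt_scale s p).
  by case: p => [[x y] z] [/= -> ->]; rewrite /L2 /= !mulr0.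
split; last exact: subset_Xfix_sqr L2_scale charpt_psi_L2.
apply: (subset_Xfix_sign charpt_psi_L2 det_rotJ (det1 _ _)).
  by rewrite /L2 /charpt /= mulmx1 mxtrace_rotJ.
by case=> _; rewrite mxtrace1 => /eqP; rewrite pnatr_eq0.
Qed.

Lemma Xfix_L3 :
  (subset_pt L3 (Xfix psi) <-> (4 %| expsum false (img_a psi) + expsum false (img_b psi)
                                    + 3 * expsum true (img_a psi) + 3 * expsum true (img_b psi))%Z)
  /\ subset_pt L3 (Xfix (ecomp psi psi)).
Proof.
have L3_scale s p : L3 p -> L3 (pt_scale s p).
  by case: p => [[x y] z] [/= -> ->]; rewrite /L3 /= !mulr0.
split; last exact: subset_Xfix_sqr L3_scale charpt_psi_L3.
have [JJ _] := @diag2_rotJ_rel CC.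
apply: (subset_Xfix_sign charpt_psi_L3 det_rotJ (_ : \det (- rotJ) = 1)).
- by rewrite -scaleN1r detZ det_rotJ mulr1 sqrrN expr1n.
- by rewrite /L3 /charpt /= linearN /= mxtrace_rotJ oppr0.
by case=> _ _; rewrite mulmxE mulrN JJ opprK mxtrace1 => /eqP; rewrite pnatr_eq0.
Qed.

End Axes.

Lemma one_or_all3 (P1 P2 P3 : Prop) (b1 b2 b3 : bool) :
  (P1 <-> b1) -> (P2 <-> b2) -> (P3 <-> b3) -> b1 (+) b2 (+) b3 ->
  (P1 /\ ~ P2 /\ ~ P3) \/ (~ P1 /\ P2 /\ ~ P3) \/ (~ P1 /\ ~ P2 /\ P3) \/ (P1 /\ P2 /\ P3).
Proof. by case: b1; case: b2; case: b3 => // -[? ?] [? ?] [? ?] _; intuition. Qed.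

Theorem lemma3p3 (psi : endo) :
  is_aut psi -> hyperbolic_bundle psi -> H1_Z2_dim psi = 3%N ->
  ( (subset_pt L1 (Xfix psi) /\ ~ subset_pt L2 (Xfix psi) /\ ~ subset_pt L3 (Xfix psi))
  \/ (~ subset_pt L1 (Xfix psi) /\ subset_pt L2 (Xfix psi) /\ ~ subset_pt L3 (Xfix psi))
  \/ (~ subset_pt L1 (Xfix psi) /\ ~ subset_pt L2 (Xfix psi) /\ subset_pt L3 (Xfix psi))
  \/ (subset_pt L1 (Xfix psi) /\ subset_pt L2 (Xfix psi) /\ subset_pt L3 (Xfix psi)) )
  /\ (subset_pt L1 (Xfix (ecomp psi psi)) /\ subset_pt L2 (Xfix (ecomp psi psi))
      /\ subset_pt L3 (Xfix (ecomp psi psi))).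
Proof.
move=> [g [psi_g _]] hyp dim3.
have [odd_a_psia even_b_psia even_a_psib odd_b_psib] := expsum_mod2 dim3.
have [fix1 sqr1] := Xfix_L1 psi_g even_b_psia odd_b_psib.
have [fix2 sqr2] := Xfix_L2 psi_g odd_a_psia even_a_psib.
have [fix3 sqr3] := Xfix_L3 psi_g odd_a_psia even_b_psia even_a_psib odd_b_psib.
split; last by [].
apply: one_or_all3 fix1 fix2 fix3 _.
exact: det1_xor_dvd4 odd_a_psia even_b_psia even_a_psib odd_b_psib (expsum_det hyp).
Qed.
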